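(* Let $m\ge1$, $N=2^m$, let $\mathcal{A}\subsetneq[0,N-1]$ (so that $\mathcal{A}^c=[0,N-1]\setminus\mathcal{A}$ is nonempty), and let $\mathbf{P}\in\mathbb{F}_2^{N\times N}$ be upper triangular with unit diagonal. Then $\mathcal{C}_{\boldsymbol{G}_N}([\max(\mathcal{A}^c)+1,N-1])$ is a decreasing monomial code of dimension $N-1-\max(\mathcal{A}^c)$ and $\mathcal{C}_{\boldsymbol{G}_N}([\max(\mathcal{A}^c)+1,N-1])\subset\mathcal{C}_{\mathbf{P}\boldsymbol{G}_N}(\mathcal{A})$.
   Context: $[\ell,u]=\{\ell,\dots,u\}$. $\boldsymbol{G}_N=\begin{pmatrix}1&0\\1&1\end{pmatrix}^{\otimes m}$ over $\mathbb{F}_2$, rows/columns indexed by $0,\dots,N-1$; $\mathcal{C}_{\mathbf{B}}(\mathcal{S})$ is the code spanned by the rows of $\mathbf{B}$ indexed by $\mathcal{S}$. For $i\in[0,N-1]$ write $\mathrm{bin}(i)=(i_0,\dots,i_{m-1})\in\mathbb{F}_2^m$ with $i=\sum_j i_j2^j$, and $\mathbf{x}^{b}=\prod_j x_j^{b_j}$ for $b\in\mathbb{F}_2^m$. Row $i$ of $\boldsymbol{G}_N$ equals the evaluation vector $\mathrm{ev}(\mathbf{x}^{\mathrm{bin}(N-1-i)})$, where $\mathrm{ev}(Q)$ lists the values of $Q\in\mathbb{F}_2[x_0,\dots,x_{m-1}]/(x_j^2-x_j)$ at the points of $\mathbb{F}_2^m$, column $k$ corresponding to the point $\mathrm{bin}(N-1-k)$.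 Thus $\mathcal{C}_{\boldsymbol{G}_N}(\mathcal{S})$ is the monomial code spanned by $\{\mathrm{ev}(f):f\in\mathcal{I}\}$ with $\mathcal{I}=\{\mathbf{x}^{\mathrm{bin}(N-1-i)}:i\in\mathcal{S}\}$. Order on monomials: $f\preceq_w g$ iff $f\mid g$; for $f=x_{i_1}\cdots x_{i_s}$, $g=x_{j_1}\cdots x_{j_s}$ of the same degree with $i_1<\dots<i_s$, $j_1<\dots<j_s$, $f\preceq_{sh}g$ iff $i_\ell\le j_\ell$ for all $\ell$; $f\preceq g$ iff there is a monomial $g^*$ with $f\preceq_{sh}g^*\preceq_w g$. A monomial set $\mathcal{I}$ is decreasing if $f\in\mathcal{I}$ and $g\preceq f$ imply $g\in\mathcal{I}$; a decreasing monomial code is a monomial code with decreasing monomial set. *)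

From HB Require Import structures.
From mathcomp Require Import all_boot all_order all_algebra.
Set Implicit Arguments. Unset Strict Implicit. Unset Printing Implicit Defensive.
Import GRing.Theory.
Local Open Scope ring_scope.

Lemma two_pow_double (m : nat) : (2 ^ m + 2 ^ m)%N = (2 ^ m.+1)%N.
Proof. by rewrite addnn -mul2n expnS. Qed.

(* G_N = [[1,0],[1,1]]^{(x) m} over F_2, built recursively:
   G_{2^(m+1)} = [[1,0],[1,1]] (x) G_{2^m} = [[G,0],[G,G]]. *)
Fixpoint GN (m : nat) : 'M['F_2]_(2 ^ m) :=
  match m return 'M['F_2]_(2 ^ m) with
  | 0 => 1%:M
  | m'.+1 => castmx (two_pow_double m', two_pow_double m')
               (block_mx (GN m') 0 (GN m') (GN m'))
  end.

(* C_B(S): the code spanned by the rows of B indexed by S, represented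
   (mxalgebra style) by a matrix whose row space is that code. *)
Definition code n k (B : 'M['F_2]_(n, k)) (S : {set 'I_n}) : 'M['F_2]_(n, k) :=
  \matrix_(i < n) (if i \in S then row i B else 0).

Definition bin (m : nat) (i : nat) : {set 'I_m} := [set j : 'I_m | odd (i %/ 2 ^ j)].

(* Monomials x^b in F_2[x_0..x_{m-1}]/(x_j^2-x_j) are identified with their
   support b (a set of variables). ev(x^b): column k is the value at the point
   bin(N-1-k), i.e. 1 iff b is contained in bin(N-1-k). *)
Definition ev (m : nat) (f : {set 'I_m}) : 'rV['F_2]_(2 ^ m) :=
  \row_(k < 2 ^ m) (if f \subset bin m (2 ^ m - 1 - k) then 1 else 0).

Definition monomial_code_mx (m : nat) (I : {set {set 'I_m}})
  : 'M['F_2]_(#|{: {set 'I_m}}|, 2 ^ m) :=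
  \matrix_(r < #|{: {set 'I_m}}|)
     (if enum_val r \in I then ev (enum_val r) else 0).

Definition idxs (m : nat) (f : {set 'I_m}) : seq nat :=
  sort leq [seq val x | x <- enum f].

Definition prec_w (m : nat) (f g : {set 'I_m}) : bool := f \subset g.

Definition prec_sh (m : nat) (f g : {set 'I_m}) : bool :=
  (#|f| == #|g|) && all2 leq (idxs f) (idxs g).

Definition prec (m : nat) (f g : {set 'I_m}) : bool :=
  [exists gs : {set 'I_m}, prec_sh f gs && prec_w gs g].

Definition decreasing (m : nat) (I : {set {set 'I_m}}) : Prop :=
  forall f g, f \in I -> prec g f -> g \in I.

Definition is_decreasing_monomial_code (m r : nat) (C : 'M['F_2]_(r, 2 ^ m)) : Prop :=
  exists I : {set {set 'I_m}}, decreasing I /\ (C == monomial_code_mx I)%MS.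

(* The entry (i, k) of G_N is 1 iff bin(N-1-i) is contained in bin(N-1-k), so row i of G_N
   is ev(x^bin(N-1-i)).  Let v(f) = sum_{j in f} 2^j be the inverse of bin: the rows i > M
   are then exactly the ev(f) with v(f) < N-1-M, and this monomial set is decreasing because
   neither a shift nor a division can increase v.  Since v is monotone for inclusion, G_N is
   lower unitriangular, hence invertible, which gives the dimension.  Finally, P being upper
   unitriangular, row i of P G_N is row i of G_N plus a combination of rows j > i, so by
   downward induction every row i > M of G_N lies in the span of the rows of P G_N indexed
   by A, and A contains every i > M = max A^c. *)

From HB Require Import structures.
From mathcomp Require Import all_boot all_order all_algebra.
From mathcomp Require Import zify.
Set Implicit Arguments. Unset Strict Implicit. Unset Printing Implicit Defensive.
Import GRing.Theory.

Lemma subset_binE m a b :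
  (bin m a \subset bin m b) = all (fun j => odd (a %/ 2 ^ j) ==> odd (b %/ 2 ^ j)) (iota 0 m).
Proof.
apply/subsetP/allP => [sub j | sub j].
  rewrite mem_iota add0n => ltjm; apply/implyP => aj.
  by have := sub (Ordinal ltjm); rewrite !inE; apply.
rewrite !inE => aj; have := sub j; rewrite mem_iota add0n ltn_ord.
by move=> /(_ isT) /implyP; apply.
Qed.

Lemma odd_div_low m j c x : (j < m)%N -> odd ((c * 2 ^ m + x) %/ 2 ^ j) = odd (x %/ 2 ^ j).
Proof.
move=> ltjm; have -> : (c * 2 ^ m = c * 2 ^ (m - j) * 2 ^ j)%N.
  by rewrite -mulnA -expnD subnK // ltnW.
by rewrite divnMDl ?expn_gt0 // oddD oddM oddX subn_eq0 leqNgt ltjm andbF.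
Qed.

Lemma odd_div_top m c x : (x < 2 ^ m)%N -> odd ((c * 2 ^ m + x) %/ 2 ^ m) = odd c.
Proof. by move=> ltx; rewrite divnMDl ?expn_gt0 // divn_small // addn0. Qed.

Lemma subset_bin_cat m (c d : bool) x y : (x < 2 ^ m)%N -> (y < 2 ^ m)%N ->
  (bin m.+1 (c * 2 ^ m + x) \subset bin m.+1 (d * 2 ^ m + y))
  = (c ==> d) && (bin m x \subset bin m y).
Proof.
move=> ltx lty; rewrite !subset_binE -[m.+1]addn1 iotaD all_cat /=.
rewrite !odd_div_top // !oddb andbT andbC.
by congr andb; apply: eq_in_all => j; rewrite mem_iota => ltjm; rewrite !odd_div_low.
Qed.

Definition nat_of_set m (f : {set 'I_m}) : nat := (\sum_(j in f) 2 ^ j)%N.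

Lemma sum_bits m k : (k < 2 ^ m)%N -> (\sum_(j < m) odd (k %/ 2 ^ j) * 2 ^ j)%N = k.
Proof.
elim: m k => [|m IH] k ltk; first by rewrite big_ord0; move: ltk; rewrite expn0; case: k.
rewrite big_ord_recl /= expn0 divn1 muln1.
under eq_bigr => j _ do rewrite /bump /= add1n expnS divnMA mulnCA.
rewrite -big_distrr /= IH; last by move: ltk; rewrite expnS; lia.
by rewrite divn2 mul2n -{3}(odd_double_half k).
Qed.

Lemma binK m k : (k < 2 ^ m)%N -> nat_of_set (bin m k) = k.
Proof.
move=> ltk; rewrite /nat_of_set -{2}(sum_bits ltk) big_mkcond /=.
by apply: eq_bigr => j _; rewrite inE; case: odd; rewrite ?mul1n ?mul0n.
Qed.

Lemma bin_inj m : injective (fun k : 'I_(2 ^ m) => bin m k).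
Proof. by move=> a b /= eq_ab; apply: val_inj; rewrite /= -(binK (ltn_ord a)) eq_ab binK. Qed.

Lemma bin_surj m (f : {set 'I_m}) : exists k : 'I_(2 ^ m), bin m k = f.
Proof.
have card_sets : #|{: {set 'I_m}}| = (2 ^ m)%N.
  by rewrite -cardsT -powersetT card_powerset cardsT card_ord.
have := @inj_card_onto _ _ _ (@bin_inj m).
by rewrite card_sets card_ord leqnn => /(_ isT f) /codomP [k ->]; exists k.
Qed.

Lemma leq_nat_of_set m (f g : {set 'I_m}) : f \subset g -> (nat_of_set f <= nat_of_set g)%N.
Proof.
move/subsetP=> sub_fg; rewrite /nat_of_set (big_mkcond (mem f)) (big_mkcond (mem g)) /=.
by apply: leq_sum => j _; case: ifP => // /sub_fg ->.
Qed.

Lemma nat_of_setE m (f : {set 'I_m}) : nat_of_set f = (\sum_(x <- idxs f) 2 ^ x)%N.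
Proof. by rewrite /idxs (perm_big _ (permEl (perm_sort _ _))) big_map big_enum. Qed.

Lemma leq_sum_exp2 s t : all2 leq s t -> (\sum_(x <- s) 2 ^ x <= \sum_(x <- t) 2 ^ x)%N.
Proof.
elim: s t => [|a s IH] [|b t] //= /andP [leab st].
by rewrite !big_cons leq_add ?IH // leq_pexp2l.
Qed.

Lemma prec_nat_of_set m (f g : {set 'I_m}) : prec g f -> (nat_of_set g <= nat_of_set f)%N.
Proof.
case/existsP => gs /andP [/andP [_ sh_g_gs] sub_gs_f].
by apply: leq_trans (leq_nat_of_set sub_gs_f); rewrite !nat_of_setE leq_sum_exp2.
Qed.

Lemma rev_lshift m (a : 'I_(2 ^ m)) : (2 ^ m.+1 - 1 - a = true * 2 ^ m + (2 ^ m - 1 - a))%N.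
Proof. by have := ltn_ord a; rewrite expnS; lia. Qed.

Lemma rev_rshift m (a : 'I_(2 ^ m)) :
  (2 ^ m.+1 - 1 - (2 ^ m + a) = false * 2 ^ m + (2 ^ m - 1 - a))%N.
Proof. by have := ltn_ord a; rewrite expnS; lia. Qed.

Lemma subn1B_ltn n a : (0 < n)%N -> (n - 1 - a < n)%N.
Proof. by move=> n_gt0; rewrite -subnDA ltn_subrL n_gt0. Qed.

Lemma GNE m (i k : 'I_(2 ^ m)) :
  GN m i k = if bin m (2 ^ m - 1 - i) \subset bin m (2 ^ m - 1 - k) then 1%R else 0%R.
Proof.
elim: m i k => [|m IH] i k; first by rewrite !ord1 /= subxx mxE.
rewrite /= castmxE; set i' := cast_ord _ i; set k' := cast_ord _ k.
rewrite -[nat_of_ord i]/(nat_of_ord i') -[nat_of_ord k]/(nat_of_ord k'); clearbody i' k'.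
by rewrite -(splitK i') -(splitK k'); case: (split i') => a; case: (split k') => b /=;
  rewrite ?block_mxEul ?block_mxEur ?block_mxEdl ?block_mxEdr ?mxE ?IH
          ?rev_lshift ?rev_rshift subset_bin_cat ?subn1B_ltn ?expn_gt0.
Qed.

Lemma row_GN m (i : 'I_(2 ^ m)) : row i (GN m) = ev (bin m (2 ^ m - 1 - i)).
Proof. by apply/rowP => k; rewrite !mxE GNE. Qed.

Lemma GN_unit m : GN m \in unitmx.
Proof.
have GN_trig : is_trig_mx (GN m).
  apply/is_trig_mxP => i k ltik; rewrite GNE; case: ifP => // /leq_nat_of_set.
  by rewrite !binK; have := ltn_ord k; lia.
by rewrite unitmxE det_trig // big1 ?unitr1 // => i _; rewrite GNE subxx.
Qed.

Local Open Scope ring_scope.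

Section Codes.
Variables n k : nat.
Implicit Types (B : 'M['F_2]_(n, k)) (S A : {set 'I_n}).

Lemma code_mul B S : code B S = code 1%:M S *m B.
Proof.
apply/row_matrixP => i; rewrite row_mul !rowK.
by case: ifP => _; rewrite ?mul0mx // row1 -rowE.
Qed.

Lemma rank_code1 S : \rank (code (1%:M : 'M['F_2]_n) S) = #|S|.
Proof.
have /mxdirectP /= rank_sum := @mxdirect_delta 'F_2 _ (mem S) n id (in2W (@inj_id _)).
have -> : \rank (code 1%:M S) = \rank (\sum_(i in S) <<delta_mx 0 i : 'rV['F_2]_n>>)%MS.
  apply/eqmx_rank/andP; split.
    apply/row_subP => i; rewrite rowK; case: ifP => Si; last exact: sub0mx.
    by apply: (sumsmx_sup i) => //; rewrite genmxE row1.
  apply/sumsmx_subP => i Si; rewrite genmxE -row1.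
  by have := row_sub i (code (1%:M : 'M['F_2]_n) S); rewrite rowK Si.
by rewrite rank_sum -sum1_card; apply: eq_bigr => i _; rewrite mxrank_gen mxrank_delta.
Qed.

Lemma rank_code B S : row_free B -> \rank (code B S) = #|S|.
Proof. by move=> freeB; rewrite code_mul mxrankMfree // rank_code1. Qed.

Lemma code_sub_triangular (P : 'M['F_2]_n) B S A :
  (forall i j : 'I_n, (j < i)%N -> P i j = 0) -> (forall i, P i i = 1) ->
  (forall i j : 'I_n, i \in S -> (i <= j)%N -> j \in S) -> S \subset A ->
  (code B S <= code (P *m B) A)%MS.
Proof.
move=> P_trig P_diag S_up /subsetP sub_SA; set C := code (P *m B) A.
suff rowB_sub d (i : 'I_n) : (n - i <= d)%N -> i \in S -> (row i B <= C)%MS.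
  apply/row_subP => i; rewrite rowK; case: ifP => Si; last exact: sub0mx.
  exact: (rowB_sub (n - i)%N).
elim: d i => [|d IH] i le_d Si; first by have := ltn_ord i; lia.
have rowPB : (row i (P *m B) <= C)%MS by have := row_sub i C; rewrite rowK sub_SA.
have -> : row i B = row i (P *m B) - \sum_(j | j != i) P i j *: row j B.
  rewrite row_mul mulmx_sum_row (bigD1 i) //= !mxE P_diag scale1r.
  by under [X in _ = _ + X - _]eq_bigr do rewrite mxE; rewrite addrK.
rewrite addmx_sub ?eqmx_opp // summx_sub // => j neq_ji.
have [lt_ji | le_ij] := ltnP j i; first by rewrite P_trig // scale0r sub0mx.
have lt_ij : (i < j)%N by rewrite ltn_neqAle le_ij andbT eq_sym.
by apply/scalemx_sub/IH; [lia | apply: S_up Si le_ij].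
Qed.

End Codes.

Lemma card_ord_gt n M : #|[set i : 'I_n | (M < i)%N]| = (n - M.+1)%N.
Proof.
rewrite cardsE -sum1_card -(big_mkord (fun i => M < i)%N (fun=> 1%N)).
elim: n => [|n IH]; first by rewrite big_geq.
by rewrite big_mkcond big_nat_recr //= -big_mkcond IH; case: ltnP; lia.
Qed.

Lemma submx_rows (F : fieldType) m1 m2 n (A : 'M[F]_(m1, n)) (B : 'M[F]_(m2, n)) :
  (forall i, row i A != 0 -> exists j, row i A = row j B) -> (A <= B)%MS.
Proof.
move=> rowsA; apply/row_subP => i.
by have [-> | /rowsA [j ->]] := eqVneq (row i A) 0; [exact: sub0mx | exact: row_sub].
Qed.

Lemma decreasing_nat_of_set_lt m K : decreasing [set f : {set 'I_m} | (nat_of_set f < K)%N].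
Proof. by move=> f g; rewrite !inE => ltfK /prec_nat_of_set; lia. Qed.

Lemma code_GN_gt m M :
  (code (GN m) [set i : 'I_(2 ^ m) | (M < i)%N]
   == monomial_code_mx [set f : {set 'I_m} | (nat_of_set f < 2 ^ m - 1 - M)%N])%MS.
Proof.
apply/andP; split; apply: submx_rows => i; rewrite rowK.
  case: ifP => [Mi _ | _]; last by rewrite eqxx.
  exists (enum_rank (bin m (2 ^ m - 1 - i))).
  rewrite rowK enum_rankK inE binK ?subn1B_ltn ?expn_gt0 // row_GN ifT //.
  by move: Mi; rewrite inE; have := ltn_ord i; lia.
case: ifP => [| _]; last by rewrite eqxx.
have [j <-] := bin_surj (enum_val i); rewrite inE binK // => ltj _.
exists (Ordinal (subn1B_ltn j (expn_gt0 2 m))); rewrite rowK inE /= row_GN.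
rewrite ifT /=; last lia.
by congr (ev (bin m _)); have := ltn_ord j; lia.
Qed.

Theorem proposition1 (m : nat) (Hm : (1 <= m)%N) (A : {set 'I_(2 ^ m)})
  (HA : A != [set: 'I_(2 ^ m)]) (P : 'M['F_2]_(2 ^ m))
  (HPlow : forall i j : 'I_(2 ^ m), (j < i)%N -> P i j = 0)
  (HPdiag : forall i : 'I_(2 ^ m), P i i = 1) :
  let M := (\max_(i in ~: A) (i : nat))%N in
  let S := [set i : 'I_(2 ^ m) | (M < i)%N] in
  is_decreasing_monomial_code (code (GN m) S)
  /\ \rank (code (GN m) S) = (2 ^ m - 1 - M)%N
  /\ (code (GN m) S <= code (P *m GN m) A)%MS.
Proof.
move=> M S; have S_sub_A : S \subset A.
  apply/subsetP => i; rewrite inE; apply: contraTT => notAi; rewrite -leqNgt.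
  by apply: leq_bigmax_cond; rewrite inE.
split; first by exists [set f | (nat_of_set f < 2 ^ m - 1 - M)%N]; split;
  [exact: decreasing_nat_of_set_lt | exact: code_GN_gt].
split; first by rewrite rank_code ?row_free_unit ?GN_unit // card_ord_gt -subnDA.
apply: code_sub_triangular S_sub_A => // i j; rewrite !inE => /leq_trans; exact.
Qed.
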